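(* For a ring $R$ with identity, the following are equivalent: (i) $R$ is left semi-hereditary (equivalently, $R\text{-Mod}$ is $1$-hereditary); (ii) for every matrix $A\in\mathbf{M}_{k\times m}(R)$ there exists a matrix $B\in\mathbf{M}_{t\times k}(R)$ (for some $t\ge1$) such that (a) for every $X\in\mathbf{M}_{1\times k}(R)$, $XA=0$ if and only if $X=YB$ for some $Y\in\mathbf{M}_{1\times t}(R)$, and (b) there exists $C\in\mathbf{M}_{k\times k}(R)$ with $BC=0$ and $CA=A$.
   Context: $R$ is left semi-hereditary if every finitely generated left ideal (equivalently, every finitely generated submodule of a finitely generated projective left module) is projective; equivalently every finitely presented left $R$-module has projective dimension $\le1$. *)

From HB Require Import structures.
From mathcomp Require Import all_boot all_order all_algebra.
Set Implicit Arguments. Unset Strict Implicit. Unset Printing Implicit Defensive.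
Import GRing.Theory.
Local Open Scope ring_scope.

Definition is_lin (R : pzRingType) (M N : lmodType R) (f : M -> N) : Prop :=
  forall (a : R) (x y : M), f (a *: x + y) = a *: f x + f y.

Definition lin_on (R : pzRingType) (V N : lmodType R) (S : V -> Prop)
  (g : V -> N) : Prop :=
  (forall x y, S x -> S y -> g (x + y) = g x + g y) /\
  (forall (a : R) x, S x -> g (a *: x) = a *: g x).

Definition projective_submod (R : pzRingType) (V : lmodType R) (S : V -> Prop)
  : Prop :=
  forall (M N : lmodType R) (f : M -> N), is_lin f ->
    (forall y : N, exists x : M, f x = y) ->
    forall g : V -> N, lin_on S g ->
      exists h : V -> M, lin_on S h /\ (forall x, S x -> f (h x) = g x).

Definition fg_left_ideal (R : pzRingType) (n : nat) (a : 'I_n -> R) : R -> Prop :=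
  fun x => exists r : 'I_n -> R, x = \sum_(i < n) r i * a i.

Definition left_semihereditary (R : pzRingType) : Prop :=
  forall (n : nat) (a : 'I_n -> R),
    @projective_submod R R^o (fg_left_ideal a).

From HB Require Import structures.
From mathcomp Require Import all_boot all_order all_algebra boolp.
Set Implicit Arguments. Unset Strict Implicit. Unset Printing Implicit Defensive.
Import GRing.Theory.
Local Open Scope ring_scope.

(* A finitely generated left ideal R a_1 + ... + R a_n is projective iff the
   surjection X |-> X a from row vectors onto it splits, i.e. iff some square
   matrix C satisfies C a = a and X C = 0 whenever X a = 0: the rows of C are
   the images of the generators under the splitting.  Such splitting matrices
   pass from columns to arbitrary matrices, since if C1 splits A1 and C2 splits
   (1 - C1) A2 then C1 + C2 (1 - C1) splits [A1 A2].  For a splitting matrix C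
   of A, the rows of B = 1 - C generate the left kernel of A and B C = 0;
   conversely (a) and (b) make C a splitting matrix of A. *)

Section Splitting.
Variable R : pzRingType.

(* X A |-> X C is then a well-defined section of X |-> X A. *)
Definition mx_splitting k m (C : 'M[R]_k) (A : 'M[R]_(k, m)) : Prop :=
  C *m A = A /\ forall X : 'rV_k, X *m A = 0 -> X *m C = 0.

Lemma mx_splitting_eq k m (C : 'M[R]_k) (A : 'M[R]_(k, m)) (X Y : 'rV_k) :
  mx_splitting C A -> X *m A = Y *m A -> X *m C = Y *m C.
Proof.
move=> [_ kerC] /eqP; rewrite -subr_eq0 -mulmxBl => /eqP/kerC.
by move/eqP; rewrite mulmxBl subr_eq0 => /eqP.
Qed.

Lemma mx_splitting_row_mx k m1 m2 (C1 C2 : 'M[R]_k)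
    (A1 : 'M[R]_(k, m1)) (A2 : 'M[R]_(k, m2)) :
  mx_splitting C1 A1 -> mx_splitting C2 ((1%:M - C1) *m A2) ->
  mx_splitting (C1 + C2 *m (1%:M - C1)) (row_mx A1 A2).
Proof.
move=> [C1A1 ker1] [C2A2 ker2]; set D := 1%:M - C1.
have DA1 : D *m A1 = 0 by rewrite mulmxBl mul1mx C1A1 subrr.
have C1D : C1 + D = 1%:M by rewrite addrC subrK.
split.
  rewrite mulmxDl !mul_mx_row -!mulmxA DA1 C2A2 mulmx0.
  by rewrite add_row_mx C1A1 addr0 -mulmxDl C1D mul1mx.
move=> X; rewrite mul_mx_row -row_mx0 => /eq_row_mx[XA1 XA2].
have XC1 := ker1 X XA1.
have XD : X *m D = X by rewrite mulmxBr mulmx1 XC1 subr0.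
have XC2 : X *m C2 = 0 by apply: ker2; rewrite mulmxA XD.
by rewrite mulmxDr XC1 mulmxA XC2 mul0mx addr0.
Qed.

Lemma mx_splitting_from_columns k :
  (forall v : 'cV[R]_k, exists C, mx_splitting C v) ->
  forall m (A : 'M[R]_(k, m)), exists C, mx_splitting C A.
Proof.
move=> split_col; elim=> [|m IHm] A.
  by exists 0; split=> [|X _]; [apply/matrixP => ? [] | exact: mulmx0].
have [C1 splitC1] := split_col (lsubmx (A : 'M_(k, 1 + m))).
have [C2 splitC2] := IHm ((1%:M - C1) *m rsubmx (A : 'M_(k, 1 + m))).
exists (C1 + C2 *m (1%:M - C1)).
by rewrite -[A](@hsubmxK _ _ 1 m); exact: mx_splitting_row_mx splitC1 splitC2.
Qed.

Lemma mx_splitting_kernel k m (C : 'M[R]_k) (A : 'M[R]_(k, m)) :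
  mx_splitting C A ->
  forall X : 'rV_k, X *m A = 0 <-> exists Y : 'rV_k, X = Y *m (1%:M - C).
Proof.
move=> [CA kerC] X; split=> [/kerC XC | [Y ->]].
  by exists X; rewrite mulmxBr mulmx1 XC subr0.
by rewrite -mulmxA mulmxBl mul1mx CA subrr mulmx0.
Qed.

Lemma mx_splitting_complK k m (C : 'M[R]_k) (A : 'M[R]_(k, m)) :
  mx_splitting C A -> (1%:M - C) *m C = 0.
Proof.
move=> splitC; apply/row_matrixP => i; rewrite row_mul row0.
apply: splitC.2; apply/(mx_splitting_kernel splitC).
by exists (delta_mx 0 i); rewrite rowE.
Qed.

Lemma kernel_generators_splitting k m t (A : 'M[R]_(k, m)) (B : 'M[R]_(t, k))
    (C : 'M[R]_k) :
  (forall X : 'rV_k, X *m A = 0 <-> exists Y : 'rV_t, X = Y *m B) ->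
  B *m C = 0 -> C *m A = A -> mx_splitting C A.
Proof.
move=> kerB BC CA; split=> // X /kerB[Y ->].
by rewrite -mulmxA BC mulmx0.
Qed.

End Splitting.

Lemma lin_on0 (R : pzRingType) (V N : lmodType R) (S : V -> Prop) (g : V -> N) :
  lin_on S g -> S 0 -> g 0 = 0.
Proof. by move=> [_ gZ] S0; move: (gZ 0 0 S0); rewrite !scale0r. Qed.

Section IsLin.
Variables (R : pzRingType) (M N : lmodType R) (f : M -> N).
Hypothesis f_lin : is_lin f.

Lemma is_lin0 : f 0 = 0.
Proof. by have := f_lin (-1) 0 0; rewrite scaler0 add0r scaleN1r addNr. Qed.

Lemma is_linD x y : f (x + y) = f x + f y.
Proof. by have := f_lin 1 x y; rewrite scale1r scale1r. Qed.

Lemma is_linZ c x : f (c *: x) = c *: f x.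
Proof. by have := f_lin c x 0; rewrite !addr0 is_lin0 addr0. Qed.

Lemma is_lin_sum (I : Type) (r : seq I) (P : pred I) (F : I -> M) :
  f (\sum_(i <- r | P i) F i) = \sum_(i <- r | P i) f (F i).
Proof. exact: (big_morph f is_linD is_lin0). Qed.

End IsLin.

Section FgLeftIdeal.
Variables (R : pzRingType) (n : nat) (a : 'I_n -> R).

Lemma mulmx_col_coef (X : 'rV[R]_n) :
  (X *m \col_i a i) 0 0 = \sum_i X 0 i * a i.
Proof. by rewrite mxE; apply: eq_bigr => i _; rewrite mxE. Qed.

Lemma fg_left_idealP x :
  fg_left_ideal a x <-> exists X : 'rV_n, x = (X *m \col_i a i) 0 0.
Proof.
split=> [[r ->] | [X ->]]; last by exists (X 0); rewrite mulmx_col_coef.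
by exists (\row_i r i); rewrite mulmx_col_coef; apply: eq_bigr => i _; rewrite mxE.
Qed.

Lemma fg_left_ideal0 : fg_left_ideal a 0.
Proof. by apply/fg_left_idealP; exists 0; rewrite mul0mx mxE. Qed.

Lemma fg_left_idealD x y :
  fg_left_ideal a x -> fg_left_ideal a y -> fg_left_ideal a (x + y).
Proof.
move=> /fg_left_idealP[X ->] /fg_left_idealP[Y ->].
by apply/fg_left_idealP; exists (X + Y); rewrite mulmxDl [RHS]mxE.
Qed.

Lemma fg_left_idealMl c x : fg_left_ideal a x -> fg_left_ideal a (c * x).
Proof.
move=> /fg_left_idealP[X ->].
by apply/fg_left_idealP; exists (c *: X); rewrite -scalemxAl [RHS]mxE.
Qed.

Lemma fg_left_ideal_gen i : fg_left_ideal a (a i).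
Proof. by apply/fg_left_idealP; exists (delta_mx 0 i); rewrite -rowE !mxE. Qed.

Lemma lin_on_fg_sum (N : lmodType R) (h : R^o -> N) :
  @lin_on _ R^o _ (fg_left_ideal a) h ->
  forall X : 'rV_n, h ((X *m \col_i a i) 0 0) = \sum_i X 0 i *: h (a i).
Proof.
move=> h_lin X; have [hD hZ] := h_lin; rewrite mulmx_col_coef.
suff [] : fg_left_ideal a (\sum_i X 0 i * a i) /\
          h (\sum_i X 0 i * a i) = \sum_i X 0 i *: h (a i) by [].
elim/big_rec2: _ => [|i x y _ [Sx <-]].
  by split; [exact: fg_left_ideal0 | exact: lin_on0 h_lin fg_left_ideal0].
have Sai := fg_left_idealMl (X 0 i) (fg_left_ideal_gen i).
split; first exact: fg_left_idealD.
by rewrite hD // hZ //; exact: fg_left_ideal_gen.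
Qed.

Definition fg_ideal_pred : {pred R^o} := fun x => `[< fg_left_ideal a x >].

Lemma fg_ideal_submod_closed : submod_closed fg_ideal_pred.
Proof.
split=> [|c x y /asboolP Sx /asboolP Sy]; apply/asboolP; first exact: fg_left_ideal0.
exact/fg_left_idealD/Sy/fg_left_idealMl.
Qed.

HB.instance Definition _ := GRing.isSubmodClosed.Build R R^o fg_ideal_pred
  fg_ideal_submod_closed.

Definition fg_ideal := {x : R^o | x \in fg_ideal_pred}.
HB.instance Definition _ := SubType.copy fg_ideal {x : R^o | x \in fg_ideal_pred}.
HB.instance Definition _ := [Choice of fg_ideal by <:].
HB.instance Definition _ := [SubChoice_isSubZmodule of fg_ideal by <:].
HB.instance Definition _ := [SubZmodule_isSubLmodule of fg_ideal by <:].

Lemma projective_fg_ideal_splitting :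
  @projective_submod R R^o (fg_left_ideal a) ->
  exists C : 'M_n, mx_splitting C (\col_i a i).
Proof.
move=> proj_a.
have coef_in (X : 'rV_n) : (X *m \col_i a i) 0 0 \in fg_ideal_pred.
  by apply/asboolP/fg_left_idealP; exists X.
pose f (X : 'rV_n) : fg_ideal := Sub ((X *m \col_i a i) 0 0) (coef_in X).
have f_lin : is_lin f.
  by move=> c X Y; apply: val_inj; rewrite /= mulmxDl -scalemxAl !mxE.
have f_surj y : exists X, f X = y.
  have /asboolP/fg_left_idealP[X yE] := valP y.
  by exists X; apply: val_inj; rewrite yE.
pose g (x : R^o) : fg_ideal := insubd 0 x.
have gK x : fg_left_ideal a x -> val (g x) = x by move=> Sx; rewrite insubdK //; apply/asboolP.
have g_lin : @lin_on _ R^o _ (fg_left_ideal a) g.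
  split=> [x y Sx Sy | c x Sx]; apply: val_inj; rewrite /= !gK //.
    exact: fg_left_idealD.
  exact: fg_left_idealMl.
have [h [h_lin fh]] := proj_a _ _ f f_lin f_surj g g_lin.
exists (\matrix_i h (a i)); split.
  apply/colP => i; have := congr1 val (fh _ (fg_left_ideal_gen i)).
  rewrite gK /=; last exact: fg_left_ideal_gen.
  by move=> hai; rewrite !mxE -hai mxE; apply: eq_bigr => j _; rewrite mxE.
move=> X XA; rewrite mulmx_sum_row; under eq_bigr do rewrite rowK.
by rewrite -lin_on_fg_sum // XA mxE (lin_on0 h_lin fg_left_ideal0).
Qed.

Lemma splitting_projective_fg_ideal (C : 'M[R]_n) :
  mx_splitting C (\col_i a i) -> @projective_submod R R^o (fg_left_ideal a).
Proof.
move=> splitC M N f f_lin f_surj g g_lin.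
have [lift f_lift] := choice (fun j => f_surj (g (a j))).
have coords_ex x : exists X : 'rV_n,
    fg_left_ideal a x -> x = (X *m \col_i a i) 0 0.
  have [/fg_left_idealP[X xE] | nSx] := EM (fg_left_ideal a x); first by exists X.
  by exists 0.
have [coords coordsK] := choice coords_ex.
pose psi (X : 'rV_n) := \sum_j (X *m C) 0 j *: lift j.
have psiE X Y : (X *m \col_i a i) 0 0 = (Y *m \col_i a i) 0 0 -> psi X = psi Y.
  move=> XY; rewrite /psi (mx_splitting_eq (Y := Y) splitC) //.
  by apply/rowP => j; rewrite ord1.
have psiD X Y : psi (X + Y) = psi X + psi Y.
  by rewrite /psi -big_split; apply: eq_bigr => j _; rewrite mulmxDl mxE scalerDl.
have psiZ c X : psi (c *: X) = c *: psi X.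
  by rewrite /psi scaler_sumr; apply: eq_bigr => j _; rewrite -scalemxAl mxE scalerA.
have f_psi X : f (psi X) = g ((X *m \col_i a i) 0 0).
  rewrite is_lin_sum //; under eq_bigr do rewrite is_linZ // f_lift.
  by rewrite -lin_on_fg_sum // -mulmxA splitC.1.
exists (psi \o coords); split; last by move=> x Sx; rewrite /= f_psi -coordsK.
split=> [x y Sx Sy | c x Sx] /=.
  rewrite -psiD; apply: psiE; rewrite mulmxDl [RHS]mxE -!coordsK //.
  exact: fg_left_idealD.
rewrite -psiZ; apply: psiE; rewrite -scalemxAl [RHS]mxE -!coordsK //.
exact: fg_left_idealMl.
Qed.

End FgLeftIdeal.

Lemma left_semihereditaryP (R : pzRingType) :
  left_semihereditary R <->
  forall n (v : 'cV[R]_n), exists C : 'M_n, mx_splitting C v.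
Proof.
split=> [semih n v | split_col n a].
  have vE : \col_i v i 0 = v by apply/colP => i; rewrite mxE.
  by rewrite -vE; apply: projective_fg_ideal_splitting.
have [C splitC] := split_col n (\col_i a i).
exact: splitting_projective_fg_ideal splitC.
Qed.

Theorem corollary5p6 (R : pzRingType) :
  left_semihereditary R <->
  (forall (k m : nat) (A : 'M[R]_(k, m)), (0 < k)%N -> (0 < m)%N ->
     exists (t : nat) (B : 'M[R]_(t, k)),
       (0 < t)%N /\
       (forall X : 'rV[R]_k, X *m A = 0 <-> exists Y : 'rV[R]_t, X = Y *m B) /\
       (exists C : 'M[R]_k, B *m C = 0 /\ C *m A = A)).
Proof.
rewrite left_semihereditaryP; split=> [split_col k m A k_gt0 _ | split_mx n v].
  have [C splitC] := mx_splitting_from_columns (split_col k) A.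
  exists k, (1%:M - C); split=> //; split; first exact: mx_splitting_kernel.
  by exists C; split; [exact: mx_splitting_complK splitC | exact: splitC.1].
case: n v => [|n] v.
  by exists 0; split=> [|X _]; [apply/matrixP => -[] | exact: mulmx0].
have [t [B [_ [kerB [C [BC CA]]]]]] := split_mx _ _ v isT isT.
by exists C; exact: kernel_generators_splitting kerB BC CA.
Qed.
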